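(* Let $\vec B$ be a binary digit vector with scale factor $N$ and cumulative digit function $g$. Then $F_{\vec B}(k/N)=g(k)/\|\vec B\|$ for all $k\in\{0,\dots,N\}$.
   Context: A binary digit vector of length (scale factor) $N\ge3$ is $\vec B=(b_0,\dots,b_{N-1})\in\{0,1\}^N$ with $2\le\|\vec B\|:=\sum_i b_i\le N-1$; its digit set is $D=\{i:b_i=1\}$. With $\phi_d(x)=(x+d)/N$ for $d\in D$, let $\mu_{\vec B}$ be the unique Borel probability measure with $\mu_{\vec B}=\frac{1}{\|\vec B\|}\sum_{d\in D}\mu_{\vec B}\circ\phi_d^{-1}$, supported on the attractor $C_{\vec B}\subset[0,1]$. The CDF is $F_{\vec B}(x)=\mu_{\vec B}([0,x])$. The cumulative digit function is $g(0)=0$, $g(i)=\sum_{j=0}^{i-1}b_j$ for $1\le i\le N$. *)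

From HB Require Import structures.
From mathcomp Require Import all_boot all_order all_algebra.
From mathcomp Require Import all_classical all_reals all_analysis.
Set Implicit Arguments. Unset Strict Implicit. Unset Printing Implicit Defensive.
Import Order.TTheory GRing.Theory Num.Theory.
Local Open Scope classical_set_scope.
Local Open Scope ring_scope.

(* A binary digit vector of length N is b : 'I_N -> bool; digit set D = {i | b i}. *)
Definition digit_norm (N : nat) (b : 'I_N -> bool) : nat := (\sum_(i < N) (b i : nat))%N.

Definition is_binary_digit_vector (N : nat) (b : 'I_N -> bool) : Prop :=
  (3 <= N)%N /\ (2 <= digit_norm b)%N /\ (digit_norm b <= N - 1)%N.

Definition cum_digit (N : nat) (b : 'I_N -> bool) (k : nat) : nat :=
  (\sum_(j < N | (j < k)%N) (b j : nat))%N.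

Definition phi_map {R : realType} (N : nat) (d : nat) (x : R) : R :=
  (x + d%:R) / N%:R.

Definition is_self_similar {R : realType} (N : nat) (b : 'I_N -> bool)
  (mu : set R -> \bar R) : Prop :=
  forall A : set R, measurable A ->
    (mu A = ((digit_norm b)%:R^-1)%:E *
           \sum_(d < N | b d) mu (phi_map N d @^-1` A))%E.

Definition digit_cdf {R : realType} (mu : set R -> \bar R) (x : R) : R :=
  fine (mu `[0, x]%classic).

From HB Require Import structures.
From mathcomp Require Import all_boot all_order all_algebra.
From mathcomp Require Import all_classical all_reals all_analysis.
From mathcomp Require Import zify lra.
Import Order.TTheory GRing.Theory Num.Theory.
Local Open Scope classical_set_scope.
Local Open Scope ring_scope.

(* The measure mu lives on ]0, 1] up to a null set.  Every branch map pulls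
   a far tail back into a farther one, so by self-similarity the mass of such a
   tail is at most that of every farther tail, hence zero by continuity from
   above.  The last branch pulls ]1, +oo[ back into itself and all others pull
   it into the null tail ]2, +oo[, so its mass is at most 1/||B|| times itself,
   hence zero; symmetrically for ]-oo, 0] with the first branch.  Finally the
   branch of digit d pulls [0, k/N] back to [-d, k - d], which carries full
   mass when d < k and none otherwise, and self-similarity counts the digits
   below k. *)

Lemma measurable_phi_map_preimage (R : realType) (N d : nat) (A : set R) :
  measurable A -> measurable (phi_map N d @^-1` A).
Proof.
move=> mA; rewrite -[_ @^-1` _]setTI.
suff mphi : measurable_fun setT (phi_map N d : R -> R) by exact: mphi.
apply: measurable_realfun.continuous_measurable_fun => x.
by apply: cvgMl; apply: cvgD; [exact: cvg_id | exact: cvg_cst].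
Qed.

Lemma sum_digits_cst (R : pzSemiRingType) (N : nat) (b : 'I_N -> bool) (c : R) :
  \sum_(d < N | b d) c = (digit_norm b)%:R * c.
Proof.
rewrite big_mkcond /digit_norm natr_sum mulr_suml; apply: eq_bigr => i _.
by case: (b i); rewrite ?mul1r ?mul0r.
Qed.

Lemma cum_digitE (R : pzSemiRingType) (N : nat) (b : 'I_N -> bool) (k : nat) :
  (cum_digit b k)%:R = \sum_(d < N | b d) ((d < k)%N)%:R :> R.
Proof.
rewrite /cum_digit natr_sum big_mkcond [RHS]big_mkcond; apply: eq_bigr => d _.
by case: (b d); case: (d < k)%N.
Qed.

Lemma fine_measure_bigcap_ge d (T : measurableType d) (R : realType)
    (P : probability T R) (E : (set T)^nat) (c : R) :
  (forall k, measurable (E k)) -> {homo E : i j / (i <= j)%N >-> j `<=` i} ->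
  (forall k, c <= fine (P (E k))) -> c <= fine (P (\bigcap_k E k)).
Proof.
move=> mE decE cE.
have mcapE : measurable (\bigcap_k E k) by exact: bigcap_measurable.
have cvgE : P \o E @ \oo --> P (\bigcap_k E k).
  apply: nonincreasing_cvg_mu => //.
    by rewrite (le_lt_trans (probability_le1 _ (mE 0%N))) ?ltry.
  by move=> i j ij; apply/subsetPset; exact: decE.
rewrite -lee_fin fineK ?fin_num_measure //.
rewrite -(cvg_lim _ cvgE) //; apply: lime_ge; first exact: (cvgP _ cvgE).
by apply: nearW => k; rewrite /= -[P (E k)]fineK ?fin_num_measure // lee_fin.
Qed.

Section self_similar_measure.
Variables (R : realType) (N : nat) (b : 'I_N -> bool) (mu : probability R R).
Hypotheses (N_gt1 : (1 < N)%N) (norm_gt1 : (1 < digit_norm b)%N).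
Hypothesis mu_self_similar : is_self_similar b mu.

Local Notation mass A := (fine (mu A)).
Local Notation phi d := (phi_map N d : R -> R).

Let N_ge2R : 2 <= N%:R :> R. Proof. by rewrite (ler_nat R 2). Qed.
Let N_gt0R : 0 < N%:R :> R. Proof. by apply: lt_le_trans N_ge2R. Qed.
Let norm_gt1R : 1 < (digit_norm b)%:R :> R. Proof. by rewrite ltr1n. Qed.

Lemma massE (A : set R) : measurable A -> mu A = (mass A)%:E.
Proof. by move=> mA; rewrite fineK ?fin_num_measure. Qed.

Lemma mass_ge0 (A : set R) : 0 <= mass A.
Proof. exact: fine_ge0. Qed.

Lemma le_mass (A B : set R) :
  measurable A -> measurable B -> A `<=` B -> mass A <= mass B.
Proof.
move=> mA mB AB; rewrite -lee_fin -!massE //.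
by apply: le_measure => //; rewrite inE.
Qed.

Lemma mass_setU_le (A B : set R) :
  measurable A -> measurable B -> mass (A `|` B) <= mass A + mass B.
Proof.
move=> mA mB; rewrite -lee_fin EFinD -!massE //; last exact: measurableU.
exact: measureU2.
Qed.

Lemma subset_mass_eq0 (A B : set R) :
  measurable A -> measurable B -> A `<=` B -> mass B = 0 -> mass A = 0.
Proof.
move=> mA mB AB B0; apply/le_anti; rewrite mass_ge0 andbT -B0.
exact: le_mass.
Qed.

Lemma mass_self_similar (A : set R) : measurable A ->
  mass A = (digit_norm b)%:R^-1 * \sum_(d < N | b d) mass (phi d @^-1` A).
Proof.
move=> mA; apply: EFin_inj; rewrite -massE // mu_self_similar // EFinM -sumEFin.
congr (_ * _)%E; apply: eq_bigr => d _.
by rewrite massE //; exact: measurable_phi_map_preimage.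
Qed.

Lemma mass_le_of_preimages_sub (A B : set R) : measurable A -> measurable B ->
  (forall d : 'I_N, phi d @^-1` A `<=` B) -> mass A <= mass B.
Proof.
move=> mA mB AB; rewrite mass_self_similar //.
apply: (@le_trans _ _ ((digit_norm b)%:R^-1 * \sum_(d < N | b d) mass B)).
  rewrite ler_wpM2l ?invr_ge0 ?ler0n //; apply: ler_sum => d _.
  by apply: le_mass => //; exact: measurable_phi_map_preimage.
by rewrite sum_digits_cst mulrA mulVf ?mul1r // gt_eqF // (lt_trans ltr01).
Qed.

Lemma mass_eq0_of_escaping (E : (set R)^nat) :
  (forall k, measurable (E k)) -> {homo E : i j / (i <= j)%N >-> j `<=` i} ->
  \bigcap_k E k = set0 -> (forall k (d : 'I_N), phi d @^-1` E k `<=` E k.+1) ->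
  mass (E 0%N) = 0.
Proof.
move=> mE decE capE escE; apply/le_anti; rewrite mass_ge0 andbT.
rewrite -(@fine0 R) -(measure0 mu) -capE.
apply: fine_measure_bigcap_ge => // k; elim: k => [//|k IHk].
by apply: (le_trans IHk); apply: mass_le_of_preimages_sub.
Qed.

Lemma mass_eq0_of_invariant_branch (A : set R) (j : 'I_N) : measurable A ->
  (forall d : 'I_N, d != j -> mass (phi d @^-1` A) = 0) ->
  phi j @^-1` A `<=` A -> mass A = 0.
Proof.
move=> mA nullA jA; apply/le_anti; rewrite mass_ge0 andbT.
(* Only the branch j contributes, so mass A <= mass A / ||B|| with ||B|| > 1. *)
have : mass A <= (digit_norm b)%:R^-1 * mass A.
  rewrite {1}mass_self_similar // ler_wpM2l ?invr_ge0 ?ler0n // big_mkcond /=.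
  apply: (@le_trans _ _ (\sum_(d < N) mass (phi d @^-1` A))).
    by apply: ler_sum => d _; case: (b d); rewrite ?mass_ge0.
  rewrite (bigD1 j) //= big1 ?addr0; last by move=> d /nullA.
  by apply: le_mass => //; exact: measurable_phi_map_preimage.
have : (digit_norm b)%:R^-1 < 1 :> R by rewrite invf_lt1 // (lt_trans ltr01).
have := mass_ge0 A; nra.
Qed.

Lemma mass_gt2_eq0 : mass `]2, +oo[%classic = 0.
Proof.
rewrite -[2]add0r.
apply: (mass_eq0_of_escaping (fun k => `]k%:R + 2, +oo[%classic)).
- by [].
- move=> i j ij x /=; rewrite !in_itv /= !andbT; apply: le_lt_trans.
  by rewrite lerD2r ler_nat.
- rewrite -subset0 => x /(_ (Num.truncn x) I); rewrite /= in_itv /= andbT.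
  have := truncnS_gt x; rewrite -addn1 natrD; lra.
- move=> k d x; rewrite /= !in_itv /= !andbT ltr_pdivlMr //.
  have dN : d%:R + 1 <= N%:R :> R by rewrite natr1 ler_nat.
  have k0 : 0 <= k%:R :> R by rewrite ler0n.
  have kN : 0 <= (k%:R + 1) * (N%:R - 2) :> R.
    by apply: mulr_ge0; [lra | rewrite subr_ge0].
  rewrite -natr1; nra.
Qed.

Lemma mass_leN1_eq0 : mass `]-oo, -1]%classic = 0.
Proof.
rewrite -[1]add0r.
apply: (mass_eq0_of_escaping (fun k => `]-oo, - (k%:R + 1)]%classic)).
- by [].
- move=> i j ij x /=; rewrite !in_itv /= => /le_trans; apply.
  by rewrite lerN2 lerD2r ler_nat.
- rewrite -subset0 => x /(_ (Num.truncn (- x)) I); rewrite /= in_itv /=.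
  have := truncnS_gt (- x); rewrite -addn1 natrD; lra.
- move=> k d x; rewrite /= !in_itv /= ler_pdivrMr //.
  have d0 : 0 <= d%:R :> R by rewrite ler0n.
  have k0 : 0 <= k%:R :> R by rewrite ler0n.
  have kN : 0 <= (k%:R + 1) * (N%:R - 2) :> R.
    by apply: mulr_ge0; [lra | rewrite subr_ge0].
  rewrite -natr1; nra.
Qed.

Lemma mass_gt1_eq0 : mass `]1, +oo[%classic = 0.
Proof.
have lastN : (N.-1 < N)%N by rewrite prednK // ltnW.
apply: (@mass_eq0_of_invariant_branch _ (Ordinal lastN)) => //.
- move=> d dlast.
  apply: (subset_mass_eq0 _ _ _ _ _ mass_gt2_eq0) => //.
    exact: measurable_phi_map_preimage.
  have d2N : d%:R + 2 <= N%:R :> R.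
    rewrite -natrD ler_nat; move: dlast (ltn_ord d).
    by rewrite -(inj_eq val_inj) /=; lia.
  by move=> x /=; rewrite !in_itv /= !andbT ltr_pdivlMr // mul1r; lra.
- move=> x /=; rewrite !in_itv /= !andbT ltr_pdivlMr // mul1r.
  have NR1 : (N.-1)%:R + 1 = N%:R :> R by rewrite natr1 prednK // ltnW.
  lra.
Qed.

Lemma mass_le0_eq0 : mass `]-oo, 0]%classic = 0.
Proof.
apply: (@mass_eq0_of_invariant_branch _ (Ordinal (ltnW N_gt1))) => //.
- move=> d d0.
  apply: (subset_mass_eq0 _ _ _ _ _ mass_leN1_eq0) => //.
    exact: measurable_phi_map_preimage.
  have d1 : 1 <= d%:R :> R.
    by rewrite (ler_nat R 1) lt0n; move: d0; rewrite -(inj_eq val_inj).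
  by move=> x /=; rewrite !in_itv /= ler_pdivrMr // mul0r; lra.
- by move=> x /=; rewrite !in_itv /= ler_pdivrMr // mul0r addr0.
Qed.

Lemma mass_eq0_outside_itvoc01 (A : set R) :
  measurable A -> A `<=` `]-oo, 0]%classic `|` `]1, +oo[%classic -> mass A = 0.
Proof.
have mout : measurable (`]-oo, 0]%classic `|` `]1, +oo[%classic : set R).
  exact: measurableU.
move=> mA Aout; apply: (subset_mass_eq0 _ _ mA mout Aout).
apply/le_anti; rewrite mass_ge0 andbT.
apply: le_trans (mass_setU_le _ _ _ _) _ => //.
by rewrite mass_le0_eq0 mass_gt1_eq0 addr0.
Qed.

Lemma mass_eq1_itvoc01_sub (A : set R) :
  measurable A -> `]0, 1]%classic `<=` A -> mass A = 1.
Proof.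
move=> mA A01; have : mass (~` A) = 0.
  apply: mass_eq0_outside_itvoc01; first exact: measurableC.
  move=> x /= Ax; case: (leP x 0) => x0; first by left; rewrite /= in_itv.
  case: (leP x 1) => x1; last by right; rewrite /= in_itv /= x1.
  by exfalso; apply/Ax/A01; rewrite /= in_itv /= x0 x1.
rewrite probability_setC // massE // -EFinB /=.
by move/eqP; rewrite subr_eq0 => /eqP <-.
Qed.

Lemma mass_phi_preimage_itv0 (d k : nat) :
  mass (phi d @^-1` `[0, k%:R / N%:R]%classic) = ((d < k)%N)%:R.
Proof.
have mphiI : measurable (phi d @^-1` `[0, k%:R / N%:R]%classic).
  exact: measurable_phi_map_preimage.
have d0 : 0 <= d%:R :> R by rewrite ler0n.
case: ltnP => dk.
- apply: mass_eq1_itvoc01_sub => // x; rewrite /= !in_itv /= => /andP[x0 x1].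
  have dk1 : d%:R + 1 <= k%:R :> R by rewrite natr1 ler_nat.
  by rewrite ler_pM2r ?invr_gt0 // pmulr_lge0 ?invr_gt0 //; apply/andP; lra.
- apply: mass_eq0_outside_itvoc01 => // x; rewrite /= !in_itv /= => /andP[_].
  have kd : k%:R <= d%:R :> R by rewrite ler_nat.
  by rewrite ler_pM2r ?invr_gt0 // => xk; left; lra.
Qed.

End self_similar_measure.

Theorem lemma2p2 (R : realType) (N : nat) (b : 'I_N -> bool)
  (mu : probability R R) :
  is_binary_digit_vector b ->
  is_self_similar b mu ->
  forall k : nat, (k <= N)%N ->
    digit_cdf mu (k%:R / N%:R) = (cum_digit b k)%:R / (digit_norm b)%:R.
Proof.
move=> [N_gt2 [norm_gt1 _]] mu_ss k _.
rewrite /digit_cdf (@mass_self_similar _ _ _ _ mu_ss) // mulrC cum_digitE.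
congr (_ * _); apply: eq_bigr => d _.
by rewrite (@mass_phi_preimage_itv0 _ _ _ _ (ltnW N_gt2) norm_gt1 mu_ss).
Qed.
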